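(* Let $n\ge 1$. If there is a balanced stack of $n$ blocks of length $1$ and weight $1$ achieving overhang $d$, then there is a sequence of at most $n-1$ lossy moves that transforms some distribution $\mu$ with $M_0[\mu]=\mu\{x\le 0\}=n$ and $\mu\{x>0\}=0$ into a distribution $\mu'$ with $\mu'\{x\ge d-1\}\ge 1$.
   Context: Stacks: the table is $B_0=(-\infty,0]\times(-\infty,0]$; block $B_i$ occupies $[x_i,x_i+1]\times[y_i,y_i+h]$, blocks have disjoint interiors; $B_i$ rests on $B_j$ if they intersect and $y_i=y_j+h$ ($B_i$ rests on the table if $B_i\cap B_0\neq\emptyset$). Supporting blocks (or the table) exert upward vertical forces $\ge0$ at points of the contact segments, with equal opposite reactions; each block has weight $1$ acting at horizontal position $x_i+\frac12$. The stack is balanced if forces can be chosen so that for every block the total force and total moment vanish. Overhang is $\max_i(x_i+1)$. A distribution is a finite set $\{(x_1,m_1),\dots,(x_k,m_k)\}$ with $m_i>0$; signed distributions allow arbitrary real $m_i$; $\mu(A)=\sum_{x_i\in A}m_i$; $M_j[\mu]=\sum_i m_ix_i^j$. A move $([a,b],\delta)$ has $b-a=1$ and $\delta$ a signed distribution on $[a,b]$ with $M_0[\delta]=M_1[\delta]=0$. The associated lossy move is $([a,b],\delta^\downarrow)$ with $\delta^\downarrow=\delta-\{(\frac{a+b}2,1)\}$; it can be applied to $\mu$ if $\mu+\delta^\downarrow$ is a distribution, and its result is $\mu+\delta^\downarrow$. *)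

From Stdlib Require Import Reals List.
Import ListNotations.
Open Scope R_scope.

(* A stack of n blocks of length 1 and height h > 0: block i (i < n) occupies
   [x i, x i + 1] x [y i, y i + h]. The table is B_0 = (-oo,0] x (-oo,0]. *)

(* Blocks (and the table) have pairwise disjoint interiors. *)
Definition is_stack (h : R) (n : nat) (x y : nat -> R) : Prop :=
  (forall i j, (i < n)%nat -> (j < n)%nat -> i <> j ->
     ~ (Rabs (x i - x j) < 1 /\ Rabs (y i - y j) < h)) /\
  (forall i, (i < n)%nat -> ~ (x i < 0 /\ y i < 0)).

(* A support is either the table (None) or a block (Some j). *)
Definition support := option nat.

Definition rests_on (h : R) (x y : nat -> R) (i : nat) (s : support) : Prop :=
  match s with
  | None => x i <= 0 /\ y i <= 0
  | Some j => Rabs (x i - x j) <= 1 /\ y i = y j + h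
  end.

Definition in_contact (x : nat -> R) (i : nat) (s : support) (p : R) : Prop :=
  x i <= p <= x i + 1 /\
  match s with
  | None => p <= 0
  | Some j => x j <= p <= x j + 1
  end.

(* A point force: the support f_down pushes the block f_up upward with
   magnitude f_mag at horizontal position f_pos (with equal opposite reaction
   on f_down if it is a block). *)
Record force := mkForce { f_up : nat; f_down : support; f_pos : R; f_mag : R }.

Definition sumR (l : list R) : R := fold_right Rplus 0 l.

Definition up_force (fs : list force) (k : nat) : R :=
  sumR (map (fun F => if Nat.eqb (f_up F) k then f_mag F else 0) fs).
Definition down_force (fs : list force) (k : nat) : R :=
  sumR (map (fun F => match f_down F with
                      | Some j => if Nat.eqb j k then f_mag F else 0
                      | None => 0 end) fs).
Definition up_moment (fs : list force) (k : nat) : R :=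
  sumR (map (fun F => if Nat.eqb (f_up F) k then f_mag F * f_pos F else 0) fs).
Definition down_moment (fs : list force) (k : nat) : R :=
  sumR (map (fun F => match f_down F with
                      | Some j => if Nat.eqb j k then f_mag F * f_pos F else 0
                      | None => 0 end) fs).

(* Balanced: forces (finitely many point forces, each >= 0, acting at points
   of contact sets between a block and something it rests on) such that every
   block has zero total force and zero total moment (weight 1 at x_i + 1/2). *)
Definition balanced (h : R) (n : nat) (x y : nat -> R) : Prop :=
  exists fs : list force,
    (forall F, In F fs ->
       (f_up F < n)%nat /\
       match f_down F with Some j => (j < n)%nat | None => True end /\
       rests_on h x y (f_up F) (f_down F) /\
       in_contact x (f_up F) (f_down F) (f_pos F) /\
       0 <= f_mag F) /\
    (forall k, (k < n)%nat ->
       up_force fs k - down_force fs k - 1 = 0 /\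
       up_moment fs k - down_moment fs k - (x k + 1/2) = 0).

Definition is_overhang (n : nat) (x : nat -> R) (d : R) : Prop :=
  (exists i, (i < n)%nat /\ x i + 1 = d) /\
  (forall i, (i < n)%nat -> x i + 1 <= d).

(* A (signed) distribution is a finite list of (position, mass) pairs,
   read as the measure sum_i m_i * delta_{x_i}. *)
Definition meas := list (R * R).

Definition Rleb (a b : R) : bool := if Rle_dec a b then true else false.
Definition Rltb (a b : R) : bool := if Rlt_dec a b then true else false.
Definition Reqb (a b : R) : bool := if Req_EM_T a b then true else false.

Definition mu_of (A : R -> bool) (mu : meas) : R :=
  sumR (map (fun pm => if A (fst pm) then snd pm else 0) mu).

Definition moment (j : nat) (mu : meas) : R :=
  sumR (map (fun pm => snd pm * (fst pm) ^ j) mu).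

(* mu is a (nonnegative) distribution: the net mass at every point is >= 0
   (points of net mass 0 are simply absent from the distribution). *)
Definition is_dist (mu : meas) : Prop :=
  forall p, 0 <= mu_of (fun q => Reqb q p) mu.

Record move := mkMove { mv_a : R; mv_delta : meas }.

Definition valid_move (m : move) : Prop :=
  (forall pm, In pm (mv_delta m) -> mv_a m <= fst pm <= mv_a m + 1) /\
  moment 0 (mv_delta m) = 0 /\ moment 1 (mv_delta m) = 0.

Definition lossy_delta (m : move) : meas :=
  mv_delta m ++ [((mv_a m + (mv_a m + 1)) / 2, -1)].

Fixpoint lossy_seq (ms : list move) (mu mu' : meas) : Prop :=
  match ms with
  | [] => mu' = mu
  | m :: ms' =>
      valid_move m /\ is_dist (mu ++ lossy_delta m) /\
      lossy_seq ms' (mu ++ lossy_delta m) mu'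
  end.

(* Fix the point forces [fs] witnessing balance, and let [S] be a set of
   "processed" blocks.  The cut distribution [cut_dist fs S] places the mass
   of every force that crosses the cut -- pushing up an unprocessed block
   from the table or from a processed block -- at its point of application.
   With nothing processed these are exactly the table forces, whose total is
   [n] (sum the force balances of all blocks) and which sit at positions
   [<= 0].  Processing a block [i] whose supports are all processed and on
   which no processed block rests is a lossy move on [[x i, x i + 1]]: it
   removes the forces under [i] and adds the forces on top of [i]; the force
   and moment balance of [i] make this a move, and the unit weight of [i] is
   exactly the lossy unit.  We process, in order of height, the blocks lying
   strictly lower than a block [k] realising the overhang: at most [n - 1]
   moves.  Afterwards all forces under [k] cross the cut; they act at
   positions [>= x k = d - 1] and carry total mass [>= 1], the weight of [k]. *)

From Stdlib Require Import Reals List Lra Lia Permutation Sorted.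
Import ListNotations.
Open Scope R_scope.
Local Open Scope bool_scope.

Lemma sumR_app (l1 l2 : list R) : sumR (l1 ++ l2) = sumR l1 + sumR l2.
Proof. induction l1 as [|a l1 IH]; simpl; [lra | rewrite IH; lra]. Qed.

Lemma mu_of_app (A : R -> bool) (l1 l2 : meas) :
  mu_of A (l1 ++ l2) = mu_of A l1 + mu_of A l2.
Proof. unfold mu_of. rewrite map_app, sumR_app. reflexivity. Qed.

Lemma sumR_map_add {T} (f g : T -> R) (l : list T) :
  sumR (map (fun a => f a + g a) l) = sumR (map f l) + sumR (map g l).
Proof. induction l as [|a l IH]; simpl; [lra | rewrite IH; lra]. Qed.

Lemma sumR_map_sub {T} (f g : T -> R) (l : list T) :
  sumR (map (fun a => f a - g a) l) = sumR (map f l) - sumR (map g l).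
Proof. induction l as [|a l IH]; simpl; [lra | rewrite IH; lra]. Qed.

Lemma sumR_map_ext {T} (f g : T -> R) (l : list T) :
  (forall a, In a l -> f a = g a) -> sumR (map f l) = sumR (map g l).
Proof.
  induction l as [|a l IH]; simpl; intros Hfg; [reflexivity|].
  rewrite Hfg, IH by auto. reflexivity.
Qed.

Lemma sumR_map_le {T} (f g : T -> R) (l : list T) :
  (forall a, In a l -> f a <= g a) -> sumR (map f l) <= sumR (map g l).
Proof.
  induction l as [|a l IH]; simpl; intros Hfg; [lra|].
  specialize (IH (fun b Hb => Hfg b (or_intror Hb))).
  specialize (Hfg a (or_introl eq_refl)). lra.
Qed.

Lemma sumR_map_zero {T} (l : list T) : sumR (map (fun _ => 0) l) = 0.
Proof. induction l as [|a l IH]; simpl; [lra | rewrite IH; lra]. Qed.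

Lemma sumR_map_nonneg {T} (f : T -> R) (l : list T) :
  (forall a, In a l -> 0 <= f a) -> 0 <= sumR (map f l).
Proof. intros Hf. rewrite <- (sumR_map_zero l). apply sumR_map_le. exact Hf. Qed.

Fixpoint block_sum (f : nat -> R) (n : nat) : R :=
  match n with O => 0 | S m => block_sum f m + f m end.

Lemma block_sum_exchange {T} (g : nat -> T -> R) (n : nat) (l : list T) :
  block_sum (fun k => sumR (map (g k) l)) n
  = sumR (map (fun a => block_sum (fun k => g k a) n) l).
Proof.
  induction n as [|n IH]; simpl.
  - symmetry. apply sumR_map_zero.
  - rewrite IH, <- sumR_map_add. reflexivity.
Qed.

Lemma block_sum_ext (f g : nat -> R) (n : nat) :
  (forall k, (k < n)%nat -> f k = g k) -> block_sum f n = block_sum g n.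
Proof.
  induction n as [|n IH]; simpl; intros Hfg; [reflexivity|].
  rewrite IH by (intros; apply Hfg; lia). rewrite Hfg by lia. reflexivity.
Qed.

Lemma block_sum_sub (f g : nat -> R) (n : nat) :
  block_sum (fun k => f k - g k) n = block_sum f n - block_sum g n.
Proof. induction n as [|n IH]; simpl; [lra | rewrite IH; lra]. Qed.

Lemma block_sum_one (n : nat) : block_sum (fun _ => 1) n = INR n.
Proof. induction n as [|n IH]; simpl block_sum; [simpl; lra | rewrite IH, S_INR; lra]. Qed.

Lemma block_sum_indicator (u : nat) (m : R) (n : nat) :
  block_sum (fun k => if Nat.eqb u k then m else 0) n = if Nat.ltb u n then m else 0.
Proof.
  induction n as [|n IH]; simpl block_sum.
  - destruct u; reflexivity.
  - rewrite IH.
    destruct (Nat.eqb_spec u n), (Nat.ltb_spec u n), (Nat.ltb_spec u (S n));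
      try lia; lra.
Qed.

Definition from_processed (S : nat -> bool) (F : force) : bool :=
  match f_down F with None => true | Some j => S j end.

Definition crosses (S : nat -> bool) (F : force) : bool :=
  from_processed S F && negb (S (f_up F)).

Definition cut_dist (fs : list force) (S : nat -> bool) : meas :=
  map (fun F => (f_pos F, if crosses S F then f_mag F else 0)) fs.

Definition add_block (i : nat) (S : nat -> bool) : nat -> bool :=
  fun j => Nat.eqb j i || S j.

Lemma mu_of_cut_dist (A : R -> bool) (fs : list force) (S : nat -> bool) :
  mu_of A (cut_dist fs S)
  = sumR (map (fun F => if A (f_pos F) then (if crosses S F then f_mag F else 0) else 0) fs).
Proof. unfold mu_of, cut_dist. rewrite map_map. reflexivity. Qed.

Lemma cut_dist_nonneg (fs : list force) (S : nat -> bool) (A : R -> bool) :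
  (forall F, In F fs -> 0 <= f_mag F) -> 0 <= mu_of A (cut_dist fs S).
Proof.
  intros Hpos. rewrite mu_of_cut_dist. apply sumR_map_nonneg. intros F HF.
  specialize (Hpos F HF). destruct (A (f_pos F)), (crosses S F); lra.
Qed.

(* Forces not touching [i]
   contribute a zero mass, placed at [x i] to stay inside the interval. *)

Definition touches (i : nat) (F : force) : bool :=
  Nat.eqb (f_up F) i || match f_down F with Some j => Nat.eqb j i | None => false end.

Definition net_flow (i : nat) (F : force) : R :=
  (match f_down F with Some j => if Nat.eqb j i then f_mag F else 0 | None => 0 end)
  - (if Nat.eqb (f_up F) i then f_mag F else 0).

Definition block_move (fs : list force) (x : nat -> R) (i : nat) : move :=
  mkMove (x i) (map (fun F => (if touches i F then f_pos F else x i, net_flow i F)) fs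
                ++ [(x i + 1/2, 1)]).

Lemma block_move_valid (fs : list force) (x : nat -> R) (i : nat) :
  (forall F, In F fs -> in_contact x (f_up F) (f_down F) (f_pos F)) ->
  up_force fs i - down_force fs i - 1 = 0 ->
  up_moment fs i - down_moment fs i - (x i + 1/2) = 0 ->
  valid_move (block_move fs x i).
Proof.
  intros Hcontact Hforce Hmoment. unfold valid_move, block_move; simpl.
  split; [|split].
  - intros pm Hin. apply in_app_or in Hin as [Hin | [<- | []]]; [|simpl; lra].
    apply in_map_iff in Hin as [F [<- HF]]. simpl. unfold touches.
    destruct (Hcontact F HF) as [Hup Hdown].
    destruct (Nat.eqb_spec (f_up F) i) as [<- |]; simpl; [exact Hup|].
    destruct (f_down F) as [j|]; [destruct (Nat.eqb_spec j i) as [<- |]|]; simpl;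
      [exact Hdown | lra | lra].
  - unfold moment. rewrite map_app, sumR_app, map_map. simpl.
    rewrite (sumR_map_ext _ (net_flow i)) by (intros; simpl; ring).
    unfold net_flow. rewrite sumR_map_sub.
    unfold up_force, down_force in Hforce. lra.
  - unfold moment. rewrite map_app, sumR_app, map_map. simpl.
    rewrite (sumR_map_ext _
      (fun F => (match f_down F with Some j => if Nat.eqb j i then f_mag F * f_pos F else 0
                                   | None => 0 end)
                - (if Nat.eqb (f_up F) i then f_mag F * f_pos F else 0))).
    + rewrite sumR_map_sub. unfold up_moment, down_moment in Hmoment. lra.
    + intros F _. unfold net_flow, touches.
      destruct (Nat.eqb (f_up F) i), (f_down F) as [j|];
        try destruct (Nat.eqb j i); simpl; ring.
Qed.

Definition same_masses (mu nu : meas) : Prop := forall A, mu_of A mu = mu_of A nu.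

Lemma lossy_block_move (fs : list force) (x : nat -> R) (i : nat) (S : nat -> bool)
    (mu : meas) :
  (forall F, In F fs -> f_down F <> Some (f_up F)) ->
  S i = false ->
  (forall F, In F fs -> f_up F = i -> from_processed S F = true) ->
  (forall F, In F fs -> f_down F = Some i -> S (f_up F) = false) ->
  same_masses mu (cut_dist fs S) ->
  same_masses (mu ++ lossy_delta (block_move fs x i)) (cut_dist fs (add_block i S)).
Proof.
  intros Hnoloop HSi Hbelow Habove Hmu A.
  unfold lossy_delta, block_move; simpl.
  rewrite !mu_of_app, Hmu.
  replace ((x i + (x i + 1)) / 2) with (x i + 1/2) by field.
  assert (Hflow : mu_of A (cut_dist fs (add_block i S))
                  = mu_of A (cut_dist fs S)
                    + mu_of A (map (fun F => (if touches i F then f_pos F else x i,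
                                              net_flow i F)) fs)).
  { rewrite !mu_of_cut_dist. unfold mu_of. rewrite map_map, <- sumR_map_add.
    apply sumR_map_ext. intros F HF. simpl.
    unfold crosses, from_processed, add_block, touches, net_flow.
    destruct (Nat.eqb_spec (f_up F) i) as [Hup | Hup].
    - specialize (Hbelow F HF Hup). specialize (Hnoloop F HF).
      unfold from_processed in Hbelow. rewrite Hup in Hnoloop |- *.
      rewrite HSi. simpl.
      destruct (f_down F) as [j|].
      + destruct (Nat.eqb_spec j i); [congruence|].
        rewrite Hbelow. simpl. destruct (A (f_pos F)); lra.
      + simpl. destruct (A (f_pos F)); lra.
    - simpl. destruct (f_down F) as [j|] eqn:Hdown.
      + destruct (Nat.eqb_spec j i) as [-> |]; simpl.
        * rewrite (Habove F HF Hdown), HSi. simpl. destruct (A (f_pos F)); lra.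
        * destruct (S j && negb (S (f_up F))), (A (f_pos F)), (A (x i)); lra.
      + destruct (negb (S (f_up F))), (A (f_pos F)), (A (x i)); lra. }
  rewrite Hflow. unfold mu_of at 3 4. simpl. destruct (A (x i + 1/2)); lra.
Qed.

Fixpoint admissible (fs : list force) (S : nat -> bool) (L : list nat) : Prop :=
  match L with
  | [] => True
  | i :: L' =>
      S i = false /\
      (forall F, In F fs -> f_up F = i -> from_processed S F = true) /\
      (forall F, In F fs -> f_down F = Some i -> S (f_up F) = false) /\
      admissible fs (add_block i S) L'
  end.

Definition add_blocks (L : list nat) (S : nat -> bool) : nat -> bool :=
  fold_left (fun S' i => add_block i S') L S.

Lemma add_blocks_old (L : list nat) (S : nat -> bool) (j : nat) :
  S j = true -> add_blocks L S j = true.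
Proof.
  revert S. induction L as [|a L IH]; simpl; intros S Hj; [exact Hj|].
  apply IH. unfold add_block. rewrite Hj. apply Bool.orb_true_r.
Qed.

Lemma add_blocks_new (L : list nat) (S : nat -> bool) (j : nat) :
  In j L -> add_blocks L S j = true.
Proof.
  revert S. induction L as [|a L IH]; simpl; intros S Hj; [contradiction|].
  destruct Hj as [<- | Hj]; [|exact (IH _ Hj)].
  apply add_blocks_old. unfold add_block. rewrite Nat.eqb_refl. reflexivity.
Qed.

Lemma add_blocks_other (L : list nat) (S : nat -> bool) (j : nat) :
  ~ In j L -> S j = false -> add_blocks L S j = false.
Proof.
  revert S. induction L as [|a L IH]; simpl; intros S Hnot Hj; [exact Hj|].
  apply IH; [tauto|]. unfold add_block. rewrite Hj.
  destruct (Nat.eqb_spec j a); [subst; tauto | reflexivity].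
Qed.

Lemma lossy_seq_of_admissible (fs : list force) (x : nat -> R) :
  (forall F, In F fs -> 0 <= f_mag F) ->
  (forall F, In F fs -> f_down F <> Some (f_up F)) ->
  forall L S mu, admissible fs S L ->
  (forall i, In i L -> valid_move (block_move fs x i)) ->
  same_masses mu (cut_dist fs S) ->
  exists mu', lossy_seq (map (block_move fs x) L) mu mu' /\
              same_masses mu' (cut_dist fs (add_blocks L S)).
Proof.
  intros Hpos Hnoloop L. induction L as [|i L IH]; intros S mu Hadm Hvalid Hmu; simpl.
  - exists mu. split; [reflexivity | exact Hmu].
  - destruct Hadm as [HSi [Hbelow [Habove Hadm]]].
    pose proof (lossy_block_move fs x i S mu Hnoloop HSi Hbelow Habove Hmu) as Hstep.
    destruct (IH _ _ Hadm (fun j Hj => Hvalid j (or_intror Hj)) Hstep) as [mu' [Hseq Hend]].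
    exists mu'. split; [|exact Hend].
    split; [apply Hvalid; left; reflexivity|]. split; [|exact Hseq].
    intros p. rewrite Hstep. apply cut_dist_nonneg. exact Hpos.
Qed.

Fixpoint insert_by (y : nat -> R) (a : nat) (l : list nat) : list nat :=
  match l with
  | [] => [a]
  | b :: l' => if Rle_dec (y a) (y b) then a :: l else b :: insert_by y a l'
  end.

Fixpoint sort_by (y : nat -> R) (l : list nat) : list nat :=
  match l with [] => [] | a :: l' => insert_by y a (sort_by y l') end.

Lemma insert_by_perm (y : nat -> R) (a : nat) (l : list nat) :
  Permutation (a :: l) (insert_by y a l).
Proof.
  induction l as [|b l IH]; simpl; [auto|].
  destruct (Rle_dec (y a) (y b)); [auto|].
  eapply perm_trans; [apply perm_swap | apply perm_skip; exact IH].
Qed.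

Lemma sort_by_perm (y : nat -> R) (l : list nat) : Permutation l (sort_by y l).
Proof.
  induction l as [|a l IH]; simpl; [auto|].
  eapply perm_trans; [apply perm_skip; exact IH | apply insert_by_perm].
Qed.

Lemma insert_by_sorted (y : nat -> R) (a : nat) (l : list nat) :
  StronglySorted (fun u v => y u <= y v) l ->
  StronglySorted (fun u v => y u <= y v) (insert_by y a l).
Proof.
  induction l as [|b l IH]; simpl; intros Hl; [repeat constructor|].
  inversion Hl as [|? ? Hl' Hb]; subst. rewrite Forall_forall in Hb.
  destruct (Rle_dec (y a) (y b)) as [Hab | Hab].
  - constructor; [exact Hl|]. constructor; [exact Hab|].
    rewrite Forall_forall. intros c Hc. specialize (Hb c Hc). lra.
  - constructor; [exact (IH Hl')|]. rewrite Forall_forall. intros c Hc.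
    apply (Permutation_in _ (Permutation_sym (insert_by_perm y a l))) in Hc.
    destruct Hc as [<- | Hc]; [lra | exact (Hb c Hc)].
Qed.

Lemma sort_by_sorted (y : nat -> R) (l : list nat) :
  StronglySorted (fun u v => y u <= y v) (sort_by y l).
Proof. induction l; simpl; [constructor | apply insert_by_sorted; assumption]. Qed.

(* Processing by increasing height is admissible: a support of a block is
   exactly [h] lower, a block resting on it exactly [h] higher. *)
Lemma height_order_admissible (fs : list force) (h : R) (x y : nat -> R) (n : nat) :
  0 < h ->
  (forall F, In F fs -> (f_up F < n)%nat /\
     match f_down F with Some j => (j < n)%nat | None => True end /\
     rests_on h x y (f_up F) (f_down F)) ->
  forall L S, NoDup L -> StronglySorted (fun u v => y u <= y v) L ->
  (forall j, In j L -> S j = false) ->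
  (forall j i, (j < n)%nat -> In i L -> y j < y i -> S j = true \/ In j L) ->
  (forall u i, S u = true -> In i L -> y u <= y i) ->
  admissible fs S L.
Proof.
  intros hpos Hfs L.
  induction L as [|a L IH]; intros S Hnodup Hsorted Hfresh Hlower Hprocessed; simpl;
    [exact I|].
  inversion Hsorted as [|? ? Hsorted' Ha]; subst. rewrite Forall_forall in Ha.
  apply NoDup_cons_iff in Hnodup as [Hanot Hnodup].
  split; [|split; [|split]].
  - apply Hfresh. left. reflexivity.
  - intros F HF Hup. destruct (Hfs F HF) as [_ [Hj Hrests]]. unfold from_processed.
    destruct (f_down F) as [j|]; [|reflexivity].
    destruct Hrests as [_ Hy]. rewrite Hup in Hy.
    destruct (Hlower j a Hj (or_introl eq_refl)) as [Hs | [Hs | Hs]]; [lra | exact Hs | |].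
    + subst. lra.
    + specialize (Ha j Hs). lra.
  - intros F HF Hdown. destruct (Hfs F HF) as [_ [_ Hrests]].
    rewrite Hdown in Hrests. destruct Hrests as [_ Hy].
    destruct (S (f_up F)) eqn:Hs; [|reflexivity].
    specialize (Hprocessed _ a Hs (or_introl eq_refl)). lra.
  - apply IH; auto.
    + intros j Hj. unfold add_block. destruct (Nat.eqb_spec j a); [subst; contradiction|].
      apply Hfresh. right. exact Hj.
    + intros j i Hj Hi Hy. unfold add_block.
      destruct (Hlower j i Hj (or_intror Hi) Hy) as [Hs | [<- | Hs]].
      * left. rewrite Hs. apply Bool.orb_true_r.
      * left. rewrite Nat.eqb_refl. reflexivity.
      * right. exact Hs.
    + intros u i Hu Hi. unfold add_block in Hu.
      apply Bool.orb_true_iff in Hu as [Hu | Hu].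
      * apply Nat.eqb_eq in Hu. subst. apply Ha. exact Hi.
      * exact (Hprocessed u i Hu (or_intror Hi)).
Qed.

(* The blocks lying strictly lower than block [k]; [k] itself is not among
   them, so there are fewer than [n]. *)
Definition blocks_below (n : nat) (y : nat -> R) (k : nat) : list nat :=
  filter (fun j => Rltb (y j) (y k)) (seq 0 n).

Lemma in_blocks_below (n : nat) (y : nat -> R) (k j : nat) :
  In j (blocks_below n y k) <-> (j < n)%nat /\ y j < y k.
Proof.
  unfold blocks_below, Rltb. rewrite filter_In, in_seq.
  destruct (Rlt_dec (y j) (y k)); split; intros; try tauto; lia.
Qed.

Lemma blocks_below_length (n : nat) (y : nat -> R) (k : nat) :
  (k < n)%nat -> (length (blocks_below n y k) <= n - 1)%nat.
Proof.
  intros Hk. unfold blocks_below.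
  assert (Hstrict : forall l, In k l ->
            (length (filter (fun j => Rltb (y j) (y k)) l) < length l)%nat).
  { induction l as [|a l IH]; simpl; intros Hin; [contradiction|].
    assert (Hle : (length (filter (fun j => Rltb (y j) (y k)) l) <= length l)%nat)
      by apply filter_length_le.
    destruct Hin as [-> | Hin].
    - unfold Rltb at 1. destruct (Rlt_dec (y k) (y k)); [lra|]. lia.
    - specialize (IH Hin). destruct (Rltb (y a) (y k)); simpl; lia. }
  specialize (Hstrict (seq 0 n)). rewrite length_seq in Hstrict.
  pose proof (Hstrict (proj2 (in_seq n 0 k) (conj (Nat.le_0_l k) Hk))). lia.
Qed.

(* Nothing processed: the cut consists of the table forces, of total mass
   [n] by summing the force balances of all blocks. *)
Lemma table_forces_total (fs : list force) (n : nat) :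
  (forall F, In F fs -> (f_up F < n)%nat /\
     match f_down F with Some j => (j < n)%nat | None => True end) ->
  (forall k, (k < n)%nat -> up_force fs k - down_force fs k - 1 = 0) ->
  sumR (map (fun F => if crosses (fun _ => false) F then f_mag F else 0) fs) = INR n.
Proof.
  intros Hfs Hbal.
  rewrite <- block_sum_one,
    (block_sum_ext _ (fun k => up_force fs k - down_force fs k))
      by (intros k Hk; specialize (Hbal k Hk); lra).
  rewrite block_sum_sub. unfold up_force, down_force.
  rewrite (block_sum_exchange (fun k F => if Nat.eqb (f_up F) k then f_mag F else 0)),
    (block_sum_exchange (fun k F => match f_down F with
                                    | Some j => if Nat.eqb j k then f_mag F else 0
                                    | None => 0 end)),
    <- sumR_map_sub.
  symmetry. apply sumR_map_ext. intros F HF.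
  destruct (Hfs F HF) as [Hup Hdown].
  rewrite block_sum_indicator. apply Nat.ltb_lt in Hup. rewrite Hup.
  unfold crosses, from_processed. simpl.
  destruct (f_down F) as [j|].
  - rewrite block_sum_indicator. apply Nat.ltb_lt in Hdown. rewrite Hdown. simpl. lra.
  - replace (block_sum (fun _ => 0) n) with 0 by (clear; induction n; simpl; lra).
    simpl. lra.
Qed.

Lemma cut_dist_mass_inside (A : R -> bool) (fs : list force) (S : nat -> bool) :
  (forall F, In F fs -> crosses S F = true -> A (f_pos F) = true) ->
  mu_of A (cut_dist fs S) = sumR (map (fun F => if crosses S F then f_mag F else 0) fs).
Proof.
  intros HA. rewrite mu_of_cut_dist. apply sumR_map_ext. intros F HF.
  destruct (crosses S F) eqn:Hc; [rewrite (HA F HF Hc); reflexivity|].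
  destruct (A (f_pos F)); reflexivity.
Qed.

Lemma cut_dist_mass_outside (A : R -> bool) (fs : list force) (S : nat -> bool) :
  (forall F, In F fs -> crosses S F = true -> A (f_pos F) = false) ->
  mu_of A (cut_dist fs S) = 0.
Proof.
  intros HA. rewrite mu_of_cut_dist, <- (sumR_map_zero fs) at 1. apply sumR_map_ext.
  intros F HF. destruct (crosses S F) eqn:Hc; [rewrite (HA F HF Hc); reflexivity|].
  destruct (A (f_pos F)); reflexivity.
Qed.

Lemma cut_dist_carries_block (A : R -> bool) (fs : list force) (S : nat -> bool) (k : nat) :
  (forall F, In F fs -> 0 <= f_mag F) ->
  (forall F, In F fs -> f_up F = k -> crosses S F = true /\ A (f_pos F) = true) ->
  up_force fs k - down_force fs k - 1 = 0 ->
  1 <= mu_of A (cut_dist fs S).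
Proof.
  intros Hpos Hk Hforce.
  assert (Hdown : 0 <= down_force fs k).
  { apply sumR_map_nonneg. intros F HF. specialize (Hpos F HF).
    destruct (f_down F) as [j|]; [destruct (Nat.eqb j k)|]; lra. }
  apply Rle_trans with (up_force fs k); [lra|].
  rewrite mu_of_cut_dist. apply sumR_map_le. intros F HF. specialize (Hpos F HF).
  destruct (Nat.eqb_spec (f_up F) k) as [Hup |].
  - destruct (Hk F HF Hup) as [-> ->]. lra.
  - destruct (A (f_pos F)), (crosses S F); lra.
Qed.

Section BalancedStack.

Variables (h : R) (n : nat) (x y : nat -> R) (fs : list force) (k : nat).
Hypothesis hpos : 0 < h.
Hypothesis Hfs : forall F, In F fs ->
  (f_up F < n)%nat /\
  match f_down F with Some j => (j < n)%nat | None => True end /\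
  rests_on h x y (f_up F) (f_down F) /\
  in_contact x (f_up F) (f_down F) (f_pos F) /\
  0 <= f_mag F.
Hypothesis Hbal : forall j, (j < n)%nat ->
  up_force fs j - down_force fs j - 1 = 0 /\
  up_moment fs j - down_moment fs j - (x j + 1/2) = 0.
Hypothesis Hk : (k < n)%nat.

Let none : nat -> bool := fun _ => false.
Let below_order : list nat := sort_by y (blocks_below n y k).

Lemma in_below_order (j : nat) : In j below_order <-> (j < n)%nat /\ y j < y k.
Proof.
  rewrite <- in_blocks_below.
  split; apply Permutation_in; [apply Permutation_sym|]; apply sort_by_perm.
Qed.

Lemma below_order_length : (length below_order <= n - 1)%nat.
Proof.
  unfold below_order. rewrite <- (Permutation_length (sort_by_perm y _)).
  exact (blocks_below_length n y k Hk).
Qed.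

Lemma table_cut_initial :
  is_dist (cut_dist fs none) /\
  moment 0 (cut_dist fs none) = INR n /\
  mu_of (fun t => Rleb t 0) (cut_dist fs none) = INR n /\
  mu_of (fun t => Rltb 0 t) (cut_dist fs none) = 0.
Proof.
  assert (Htable : forall F, In F fs -> crosses none F = true -> f_pos F <= 0).
  { intros F HF Hc. destruct (Hfs F HF) as [_ [_ [_ [[_ Hpos0] _]]]].
    unfold crosses, from_processed in Hc. destruct (f_down F); [discriminate | exact Hpos0]. }
  assert (Htotal := table_forces_total fs n
    (fun F HF => let '(conj H1 (conj H2 _)) := Hfs F HF in conj H1 H2)
    (fun j Hj => proj1 (Hbal j Hj))).
  repeat split.
  - intros p. apply cut_dist_nonneg. intros F HF. apply Hfs, HF.
  - rewrite <- Htotal. unfold moment, cut_dist. rewrite map_map.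
    apply sumR_map_ext. intros F _. apply Rmult_1_r.
  - rewrite <- Htotal. apply cut_dist_mass_inside. intros F HF Hc.
    unfold Rleb. destruct (Rle_dec (f_pos F) 0); [reflexivity|].
    specialize (Htable F HF Hc). lra.
  - apply cut_dist_mass_outside. intros F HF Hc.
    unfold Rltb. destruct (Rlt_dec 0 (f_pos F)); [|reflexivity].
    specialize (Htable F HF Hc). lra.
Qed.

Lemma below_order_moves :
  exists mu', lossy_seq (map (block_move fs x) below_order) (cut_dist fs none) mu' /\
              same_masses mu' (cut_dist fs (add_blocks below_order none)).
Proof.
  assert (Hpos : forall F, In F fs -> 0 <= f_mag F) by (intros F HF; apply Hfs, HF).
  assert (Hnoloop : forall F, In F fs -> f_down F <> Some (f_up F)).
  { intros F HF Hloop. destruct (Hfs F HF) as [_ [_ [Hrests _]]].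
    rewrite Hloop in Hrests. simpl in Hrests. lra. }
  apply lossy_seq_of_admissible; auto; [| | intros A; reflexivity].
  - apply (height_order_admissible fs h x y n hpos);
      [ intros F HF; destruct (Hfs F HF) as [? [? [? _]]]; auto
      | apply (Permutation_NoDup (sort_by_perm y _)), NoDup_filter, seq_NoDup
      | apply sort_by_sorted | reflexivity | | discriminate ].
    intros j i Hj Hi Hy. right.
    apply in_below_order. apply in_below_order in Hi. split; [exact Hj | lra].
  - intros i Hi. apply in_below_order in Hi. destruct (Hbal i (proj1 Hi)).
    apply block_move_valid; auto. intros F HF. apply Hfs, HF.
Qed.

Lemma top_block_carried :
  1 <= mu_of (fun t => Rleb (x k) t) (cut_dist fs (add_blocks below_order none)).
Proof.
  apply (cut_dist_carries_block _ fs _ k); [intros F HF; apply Hfs, HF | | apply Hbal, Hk].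
  intros F HF Hup. destruct (Hfs F HF) as [_ [Hj [Hrests [[[Hx _] _] _]]]].
  rewrite Hup in Hrests, Hx. split.
  - unfold crosses, from_processed. rewrite Hup, add_blocks_other; try reflexivity.
    + destruct (f_down F) as [j|]; [|reflexivity].
      rewrite add_blocks_new; [reflexivity|]. apply in_below_order.
      destruct Hrests as [_ Hy]. split; [exact Hj | lra].
    + intros Hin. apply in_below_order in Hin. lra.
  - unfold Rleb. destruct (Rle_dec (x k) (f_pos F)); [reflexivity | lra].
Qed.

End BalancedStack.

Theorem mainTheorem7 (h : R) (n : nat) (x y : nat -> R) (d : R) :
  0 < h -> (1 <= n)%nat ->
  is_stack h n x y -> balanced h n x y -> is_overhang n x d ->
  exists (mu : meas) (ms : list move) (mu' : meas),
    is_dist mu /\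
    moment 0 mu = INR n /\
    mu_of (fun t => Rleb t 0) mu = INR n /\
    mu_of (fun t => Rltb 0 t) mu = 0 /\
    (length ms <= n - 1)%nat /\
    lossy_seq ms mu mu' /\
    1 <= mu_of (fun t => Rleb (d - 1) t) mu'.
Proof.
  intros hpos _ _ [fs [Hfs Hbal]] [[k [Hk Hkd]] _].
  replace (d - 1) with (x k) by lra.
  destruct (below_order_moves h n x y fs k hpos Hfs Hbal) as [mu' [Hseq Hend]].
  exists (cut_dist fs (fun _ => false)),
    (map (block_move fs x) (sort_by y (blocks_below n y k))), mu'.
  destruct (table_cut_initial h n x y fs Hfs Hbal) as [Hdist [Hmass [Hleft Hright]]].
  repeat split; auto.
  - rewrite length_map. exact (below_order_length n y k Hk).
  - rewrite Hend. exact (top_block_carried h n x y fs k hpos Hfs Hbal Hk).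
Qed.
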